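(* Let $n\ge2$, $m\ge0$, $p$, $q$ be fixed integers with $0\le p\le 2n-4$, $0\le q\le 2n-3$, $p+q\le 2n-3$. Then there is a polynomial $\alpha_{p,q}(j)$ in $j$ of degree at most $2(2n-3-p-q)+q-1$ (the zero polynomial if this number is negative) such that for every integer $j$ with $1\le j\le n-1$, the coefficient of $x^pz^q$ in $$(2x+m+z+1)_{j-1}\,(x+2z-j+2)_{j-1}\,(x+m+2j-z+2)_{2n-2j-2}\,(m+3j-3z)$$ equals $2^j\alpha_{p,q}(j)$.
   Context: $(a)_k:=a(a+1)\cdots(a+k-1)$ for $k\ge1$, $(a)_0:=1$; here $x,z$ are indeterminates. *)

From mathcomp Require Import all_boot all_order all_algebra.
Set Implicit Arguments. Unset Strict Implicit. Unset Printing Implicit Defensive.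
Import GRing.Theory.
Local Open Scope ring_scope.

Definition poch (R : nzRingType) (a : R) (k : nat) : R :=
  \prod_(i < k) (a + i%:R).

(* Bivariate polynomials in x, z over rat: {poly {poly rat}}, outer variable x,
   inner variable z.  The coefficient of x^p z^q of P is (P`_p)`_q. *)
Definition bvX : {poly {poly rat}} := 'X.
Definition bvZ : {poly {poly rat}} := ('X)%:P.
Definition bvC (r : rat) : {poly {poly rat}} := r%:P%:P.

Definition coefxz (P : {poly {poly rat}}) (p q : nat) : rat := (P`_p)`_q.

Definition prodA10 (n m j : nat) : {poly {poly rat}} :=
  poch (bvX *+ 2 + bvC m%:R + bvZ + 1) (j - 1)
  * poch (bvX + bvZ *+ 2 - bvC j%:R + bvC 2) (j - 1)
  * poch (bvX + bvC m%:R + bvC (2 * j)%:R - bvZ + bvC 2) (2 * n - 2 * j - 2)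
  * (bvC m%:R + bvC (3 * j)%:R - bvZ *+ 3).

From mathcomp Require Import all_boot all_order all_algebra.
From mathcomp Require Import ring zify.
Set Implicit Arguments. Unset Strict Implicit. Unset Printing Implicit Defensive.
Import GRing.Theory Num.Theory.
Local Open Scope ring_scope.

(* The product is a product of N = 2n-3 linear forms a x + b z + c.  Viewing it as
   a homogeneous form in x, z and a third variable, the coefficient of x^p z^q equals
   the coefficient of x^(N-p-q) z^q in the product of the forms with a and c swapped.
   That swapped product consists of blocks prod_(i<L) ((c + s i) x + b z + a), with
   lengths L affine in j, and one more linear factor.  In such a block the
   coefficient of x^e z^q is a^L times a polynomial in L of degree at most 2e+q: it
   satisfies a first-order recurrence in L whose inhomogeneous part has degree
   2e+q-1, which a discrete antidifference integrates.  These degree bounds add up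
   under multiplication, and only the first block has a = 2, whence the factor 2^j. *)

Definition linxz (t : rat * rat * rat) : {poly {poly rat}} :=
  bvC t.1.1 * bvX + bvC t.1.2 * bvZ + bvC t.2.

Definition swap_xc (t : rat * rat * rat) : rat * rat * rat := (t.2, t.1.2, t.1.1).

Lemma coefxz1 p q : coefxz 1 p q = ((p == 0%N) && (q == 0%N))%:R.
Proof. by rewrite /coefxz coef1; case: p => [|p]; rewrite ?coef1 ?coef0. Qed.

Lemma coefxz_linxzM t P p q :
  coefxz (linxz t * P) p q =
    t.1.1 * (if p is p'.+1 then coefxz P p' q else 0)
  + t.1.2 * (if q is q'.+1 then coefxz P p q' else 0)
  + t.2 * coefxz P p q.
Proof.
rewrite /coefxz /linxz /bvX /bvZ /bvC !mulrDl -!mulrA !coefD !coefCM coefXM.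
by case: p => [|p]; case: q => [|q]; rewrite /= ?coefCM ?coefXM ?coef0 ?mulr0.
Qed.

Lemma coefxz_prod_linxz_eq0 r p q : (size r < p + q)%N ->
  coefxz (\prod_(t <- r) linxz t) p q = 0.
Proof.
elim: r p q => [|t r IH] p q /= ltrpq.
  by rewrite big_nil coefxz1; case: p q ltrpq => [|p] [|q].
rewrite big_cons coefxz_linxzM IH; last lia.
by case: p q ltrpq => [|p] [|q] ?; rewrite ?IH ?mulr0 ?addr0 //; lia.
Qed.

Lemma coefxz_prod_linxz_swap r p q e : (p + q + e = size r)%N ->
  coefxz (\prod_(t <- r) linxz t) p q =
  coefxz (\prod_(t <- r) linxz (swap_xc t)) e q.
Proof.
elim: r p q e => [|t r IH] p q e /=.
  by case: p q e => [|?] [|?] [|?] // _; rewrite !big_nil !coefxz1.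
rewrite !big_cons !coefxz_linxzM /= => sz_r.
set C := coefxz (\prod_(t <- r) linxz t).
set C' := coefxz (\prod_(t <- r) linxz (swap_xc t)).
have C'_eq0 i k : (size r < i + k)%N -> C' i k = 0.
  move=> ?; rewrite /C' -(big_map swap_xc xpredT linxz).
  by rewrite coefxz_prod_linxz_eq0 ?size_map.
have -> : (if p is p'.+1 then C p' q else 0) = C' e q.
  by case: p sz_r => [|p] ?; [rewrite C'_eq0 //; lia | apply: IH; lia].
have -> : C p q = (if e is e'.+1 then C' e' q else 0).
  case: e sz_r => [|e] ?; last by apply: IH; lia.
  by rewrite /C coefxz_prod_linxz_eq0 //; lia.
have -> : (if q is q'.+1 then C p q' else 0) = (if q is q'.+1 then C' e q' else 0).
  by case: q sz_r => [|q] // ?; apply: IH; lia.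
by rewrite addrC (addrC (t.1.1 * _)) addrA.
Qed.

Definition wpoly (D : pred nat) (d : nat) (w v : nat -> rat) :=
  exists2 f : {poly rat}, (size f <= d)%N & forall j, D j -> v j = w j * f.[j%:R].

Section WeightedPolynomials.
Variables (D : pred nat) (w : nat -> rat).

Lemma wpoly_leq d d' v : (d <= d')%N -> wpoly D d w v -> wpoly D d' w v.
Proof. by move=> le_dd' [f sz_f Ef]; exists f => //; apply: leq_trans le_dd'. Qed.

Lemma eq_wpoly d v v' : (forall j, D j -> v j = v' j) -> wpoly D d w v -> wpoly D d w v'.
Proof. by move=> Ev [f sz_f Ef]; exists f => // j Dj; rewrite -Ev ?Ef. Qed.

Lemma wpoly0 d : wpoly D d w (fun=> 0).
Proof. by exists 0 => [|j _]; rewrite ?size_poly0 ?horner0 ?mulr0. Qed.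

Lemma wpolyD d v1 v2 :
  wpoly D d w v1 -> wpoly D d w v2 -> wpoly D d w (fun j => v1 j + v2 j).
Proof.
move=> [f1 sz_f1 E1] [f2 sz_f2 E2]; exists (f1 + f2) => [|j Dj].
  by rewrite (leq_trans (size_add _ _)) // geq_max sz_f1 sz_f2.
by rewrite E1 // E2 // hornerD mulrDr.
Qed.

Lemma wpoly_sum d n (v : 'I_n -> nat -> rat) : (forall i, wpoly D d w (v i)) ->
  wpoly D d w (fun j => \sum_(i < n) v i j).
Proof.
elim: n v => [|n IH] v wv.
  by apply: eq_wpoly (wpoly0 d) => j _; rewrite big_ord0.
apply: eq_wpoly (wpolyD (IH _ (fun i => wv (widen_ord (leqnSn n) i))) (wv ord_max)).
by move=> j _; rewrite big_ord_recr.
Qed.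

End WeightedPolynomials.

Lemma wpolyM D w1 w2 d1 d2 v1 v2 : wpoly D d1 w1 v1 -> wpoly D d2 w2 v2 ->
  wpoly D (d1 + d2).-1 (fun j => w1 j * w2 j) (fun j => v1 j * v2 j).
Proof.
move=> [f1 sz_f1 E1] [f2 sz_f2 E2]; exists (f1 * f2) => [|j Dj].
  by rewrite (leq_trans (size_polyMleq _ _)) //; lia.
by rewrite E1 // E2 // hornerM; ring.
Qed.

Lemma size_affine_leq (a0 a1 : rat) : (size (a0%:P + a1 *: 'X : {poly rat})%R <= 2)%N.
Proof.
rewrite (leq_trans (size_add _ _)) // geq_max (leq_trans (size_polyC_leq1 _)) //.
by rewrite (leq_trans (size_scale_leq _ _)) ?size_polyX.
Qed.

Lemma size_comp_affine_leq (f : {poly rat}) (a0 a1 : rat) :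
  (size (f \Po (a0%:P + a1 *: 'X))%R <= size f)%N.
Proof.
have sz_aff := size_affine_leq a0 a1.
have [->|nz_f] := eqVneq f 0; first by rewrite comp_poly0 size_poly0.
rewrite (leq_trans (size_comp_poly_leq _ _)) //.
have : (0 < size f)%N by rewrite size_poly_gt0.
move: (size f) (size (a0%:P + a1 *: 'X)) sz_aff => n k; nia.
Qed.

Lemma wpoly_comp_affine (D : pred nat) d (w v : nat -> rat) (L : nat -> nat)
    (a0 a1 : rat) :
  (forall j, D j -> (L j)%:R = a0 + a1 * j%:R) ->
  wpoly predT d w v -> wpoly D d (w \o L) (v \o L).
Proof.
move=> EL [f sz_f Ef]; exists (f \Po (a0%:P + a1 *: 'X)) => [|j Dj].
  exact: leq_trans (size_comp_affine_leq _ _ _) sz_f.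
by rewrite /= Ef // horner_comp hornerD hornerC hornerZ hornerX EL.
Qed.

Lemma deltaXn k :
  ('X + 1) ^+ k.+1 - 'X^(k.+1) = \poly_(i < k.+1) ('C(k.+1, i)%:R : rat).
Proof.
rewrite exprD1n big_ord_recr /= binn mulr1n addrK poly_def.
by apply: eq_bigr => i _; rewrite scaler_nat.
Qed.

(* Subtracting a multiple of [deltaXn] kills the top coefficient of [g]. *)
Lemma poly_antidifference k (g : {poly rat}) : (size g <= k)%N ->
  exists2 G : {poly rat}, (size G <= k.+1)%N & forall x, G.[x + 1] - G.[x] = g.[x].
Proof.
elim: k g => [|k IH] g sz_g.
  move: sz_g; rewrite leqn0 size_poly_eq0 => /eqP ->.
  by exists 0 => [|x]; rewrite ?size_poly0 ?horner0 ?subrr.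
pose c := g`_k / k.+1%:R.
have sz_g' : (size (g - c *: (('X + 1) ^+ k.+1 - 'X^(k.+1)))%R <= k)%N.
  apply/leq_sizeP => i le_ki; rewrite deltaXn coefB coefZ coef_poly.
  have [->|lt_ki] := eqVneq i k.
    by rewrite ltnSn binSn /c mulfVK ?subrr // pnatr_eq0.
  have /leq_sizeP -> := sz_g; last by rewrite ltn_neqAle eq_sym lt_ki.
  by rewrite ltnS leqNgt ltn_neqAle eq_sym lt_ki le_ki /= mulr0 subrr.
have [G sz_G EG] := IH _ sz_g'.
exists (G + c *: 'X^(k.+1)) => [|x].
  rewrite (leq_trans (size_add _ _)) // geq_max (leq_trans sz_G) //.
  by rewrite (leq_trans (size_scale_leq _ _)) ?size_polyXn.
rewrite !hornerE; transitivity (G.[x + 1] - G.[x] + c * ((x + 1) ^+ k.+1 - x ^+ k.+1)).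
  by ring.
by rewrite EG !hornerE; ring.
Qed.

Lemma wpoly_recurrence (a : rat) k (u : nat -> rat) (g : {poly rat}) :
  (size g <= k)%N -> (forall L, u L.+1 = a * u L + a ^+ L.+1 * g.[L%:R]) ->
  wpoly predT k.+1 (fun L => a ^+ L) u.
Proof.
move=> sz_g Eu; have [G sz_G EG] := poly_antidifference sz_g.
exists (G + (u 0%N - G.[0])%:P) => [|L _].
  by rewrite (leq_trans (size_add _ _)) // geq_max sz_G (leq_trans (size_polyC_leq1 _)).
elim: L => [|L IH]; first by rewrite expr0 mul1r hornerD hornerC; ring.
by rewrite Eu IH -natr1 !hornerD !hornerC -EG exprS; ring.
Qed.

Definition ap_factors (a b c s : rat) (L : nat) : seq (rat * rat * rat) :=
  [seq (a, b, c + s * i%:R) | i <- iota 0 L].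

Definition ap_block (a b c s : rat) (L : nat) : {poly {poly rat}} :=
  \prod_(t <- ap_factors a b c s L) linxz (swap_xc t).

Lemma ap_blockS a b c s L :
  ap_block a b c s L.+1 = linxz (c + s * L%:R, b, a) * ap_block a b c s L.
Proof.
by rewrite /ap_block /ap_factors -addn1 iotaD map_cat big_cat /= big_seq1 mulrC.
Qed.

Section ApBlockCoef.
Variables (a b c s : rat).
Hypothesis a_neq0 : a != 0.

Let u e q L := coefxz (ap_block a b c s L) e q.

Lemma coef_ap_block_step e q :
  wpoly predT (2 * e + q) (fun L => a ^+ L)
    (fun L => if q is q'.+1 then u e q' L else 0) ->
  wpoly predT (2 * e + q).-1 (fun L => a ^+ L)
    (fun L => if e is e'.+1 then u e' q L else 0) ->
  wpoly predT (2 * e + q).+1 (fun L => a ^+ L) (u e q).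
Proof.
move=> [Fz sz_Fz EFz] [Fx sz_Fx EFx].
apply: (@wpoly_recurrence a _ _ (a^-1 *: (b *: Fz + (c%:P + s *: 'X) * Fx))).
  rewrite (leq_trans (size_scale_leq _ _)) // (leq_trans (size_add _ _)) // geq_max.
  rewrite (leq_trans (size_scale_leq _ _)) //=.
  have [->|nz_Fx] := eqVneq Fx 0; first by rewrite mulr0 size_poly0.
  rewrite (leq_trans (size_polyMleq _ _)) //.
  have sz_lin := size_affine_leq c s.
  have : (0 < size Fx)%N by rewrite size_poly_gt0.
  move: (size _) (size Fx) sz_lin sz_Fx => k F; lia.
move=> L; rewrite /u ap_blockS coefxz_linxzM /= -/(u _ _ _) EFz // EFx //.
by rewrite !(hornerZ, hornerD, hornerM, hornerC, hornerX) exprS; field.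
Qed.

Lemma coef_ap_block e q :
  wpoly predT (2 * e + q).+1 (fun L => a ^+ L) (u e q).
Proof.
elim: e q => [|e IHe] q; elim: q => [|q IHq]; apply: coef_ap_block_step;
  try exact: wpoly0.
- by rewrite addnS; exact: IHq.
- by apply: wpoly_leq (IHe 0%N); lia.
- by rewrite addnS; exact: IHq.
- by apply: wpoly_leq (IHe q.+1); lia.
Qed.

End ApBlockCoef.

Definition coef_graded (D : pred nat) (k : nat) (w : nat -> rat)
    (H : nat -> {poly {poly rat}}) :=
  forall e q, wpoly D (2 * e + q + k) w (fun j => coefxz (H j) e q).

Lemma coefxzM P Q e q : coefxz (P * Q) e q =
  \sum_(i < e.+1) \sum_(k < q.+1) coefxz P i k * coefxz Q (e - i) (q - k).
Proof. by rewrite /coefxz coefM coef_sum; apply: eq_bigr => i _; rewrite coefM. Qed.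

Lemma coef_gradedM D k1 k2 w1 w2 H1 H2 :
  coef_graded D k1 w1 H1 -> coef_graded D k2 w2 H2 ->
  coef_graded D (k1 + k2).-1 (fun j => w1 j * w2 j) (fun j => H1 j * H2 j).
Proof.
move=> gr1 gr2 e q; apply: eq_wpoly (fun j _ => esym (coefxzM _ _ e q)) _.
apply: wpoly_sum => i; apply: wpoly_sum => k.
apply: wpoly_leq (wpolyM (gr1 i k) (gr2 (e - i)%N (q - k)%N)).
by have := ltn_ord i; have := ltn_ord k; lia.
Qed.

Lemma coef_graded_ap_block (D : pred nat) (a b c s : rat) (L : nat -> nat)
    (a0 a1 : rat) :
  a != 0 -> (forall j, D j -> (L j)%:R = a0 + a1 * j%:R) ->
  coef_graded D 1 (fun j => a ^+ L j) (fun j => ap_block a b c s (L j)).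
Proof.
move=> a_neq0 EL e q; rewrite addn1.
exact: wpoly_comp_affine EL (coef_ap_block _ _ _ a_neq0 e q).
Qed.

Lemma coef_graded_linxz (D : pred nat) (u0 u1 v : rat) :
  coef_graded D 0 (fun=> 1) (fun j => linxz (u0 + u1 * j%:R, v, 0)).
Proof.
move=> e q; rewrite addn0.
exists (if (e, q) == (1, 0)%N then u0%:P + u1 *: 'X
        else if (e, q) == (0, 1)%N then v%:P else 0) => [|j _].
  by case: e q => [|[|e]] [|[|q]];
    rewrite /= ?size_poly0 ?size_affine_leq ?size_polyC_leq1.
rewrite -[linxz _]mulr1 coefxz_linxzM.
by case: e q => [|[|e]] [|[|q]]; rewrite /= !coefxz1 !hornerE /=; ring.
Qed.

Lemma poch_rev (R : comNzRingType) (a : R) k :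
  poch a k = \prod_(i < k) (a + (k - i.+1)%:R).
Proof. by rewrite /poch -(big_mkord xpredT (fun i => a + i%:R)) big_rev_mkord subn0. Qed.

Lemma prod_ap_factors a b c s L :
  \prod_(t <- ap_factors a b c s L) linxz t = \prod_(i < L) linxz (a, b, c + s * i%:R).
Proof.
by rewrite big_map (_ : iota 0 L = index_iota 0 L) ?big_mkord // /index_iota subn0.
Qed.

(* The second and third Pochhammer symbols are listed backwards, so that their
   progressions start at a value independent of j. *)
Definition factorsA10 (n m j : nat) : seq (rat * rat * rat) :=
     ap_factors 2%:R 1 (m%:R + 1) 1 (j - 1)
  ++ ap_factors 1 2%:R 0 (-1) (j - 1)
  ++ ap_factors 1 (-1) (m%:R + (2 * n)%:R - 1) (-1) (2 * n - 2 * j - 2)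
  ++ [:: (0, - 3%:R, m%:R + 3%:R * j%:R)].

Lemma prodA10_factors n m j : prodA10 n m j = \prod_(t <- factorsA10 n m j) linxz t.
Proof.
rewrite /factorsA10 !big_cat /= big_seq1 !prod_ap_factors !mulrA /prodA10 /linxz /bvC /=.
congr (_ * _ * _ * _); last by ring.
- by rewrite /poch; apply: eq_bigr => i _; ring.
- rewrite poch_rev; apply: eq_bigr => i _; have := ltn_ord i => lt_ij.
  rewrite (_ : j - 1 - i.+1 = j - i.+2)%N; last lia.
  by rewrite natrB; [ring | lia].
- rewrite poch_rev; apply: eq_bigr => i _; have := ltn_ord i => lt_i.
  rewrite (_ : 2 * n - 2 * j - 2 - i.+1 = 2 * n - (2 * j + i + 3))%N; last lia.
  by rewrite natrB; [ring | lia].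
Qed.

Lemma size_factorsA10 n m j :
  (1 <= j <= n - 1)%N -> size (factorsA10 n m j) = (2 * n - 3)%N.
Proof. by rewrite /factorsA10 !size_cat !size_map !size_iota /=; lia. Qed.

Lemma prod_swap_factorsA10 n m j :
  \prod_(t <- factorsA10 n m j) linxz (swap_xc t) =
    ap_block 2%:R 1 (m%:R + 1) 1 (j - 1)
  * (ap_block 1 2%:R 0 (-1) (j - 1)
  * (ap_block 1 (-1) (m%:R + (2 * n)%:R - 1) (-1) (2 * n - 2 * j - 2)
  * linxz (m%:R + 3%:R * j%:R, - 3%:R, 0))).
Proof. by rewrite /factorsA10 !big_cat /= big_seq1. Qed.

Theorem lemmaA10 (n m p q : nat) :
  (2 <= n)%N -> (p <= 2 * n - 4)%N -> (q <= 2 * n - 3)%N -> (p + q <= 2 * n - 3)%N ->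
  exists alpha : {poly rat},
    (size alpha <= 2 * (2 * n - 3 - p - q) + q)%N /\
    forall j : nat, (1 <= j <= n - 1)%N ->
      coefxz (prodA10 n m j) p q = 2%:R ^+ j * alpha.[j%:R].
Proof.
move=> n_ge2 _ _ le_pq.
pose D j := (1 <= j <= n - 1)%N.
have len12_affine j : D j -> ((j - 1)%N%:R : rat) = -1 + 1 * j%:R.
  by case/andP=> j_ge1 _; rewrite natrB //; ring.
have len3_affine j :
    D j -> ((2 * n - 2 * j - 2)%N%:R : rat) = ((2 * n)%:R - 2%:R) + - 2%:R * j%:R.
  case/andP=> _ le_jn; rewrite (_ : 2 * n - 2 * j - 2 = 2 * n - (2 * j + 2))%N; last lia.
  by rewrite natrB; [ring | lia].
have two_neq0 : (2%:R : rat) != 0 by rewrite pnatr_eq0.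
have := coef_gradedM (coef_graded_ap_block 1 (m%:R + 1) 1 two_neq0 len12_affine)
       (coef_gradedM (coef_graded_ap_block 2%:R 0 (-1) (oner_neq0 _) len12_affine)
       (coef_gradedM (coef_graded_ap_block (-1) (m%:R + (2 * n)%:R - 1) (-1)
                                           (oner_neq0 _) len3_affine)
                     (coef_graded_linxz D m%:R 3%:R (- 3%:R)))).
move=> /(_ (2 * n - 3 - p - q)%N q) [f sz_f Ef].
exists (2%:R^-1 *: f); split=> [|j Dj].
  by rewrite (leq_trans (size_scale_leq _ _)) // -[leqRHS]addn0.
rewrite prodA10_factors (@coefxz_prod_linxz_swap _ _ _ (2 * n - 3 - p - q)); last first.
  by rewrite size_factorsA10 //; lia.
rewrite prod_swap_factorsA10 Ef // !expr1n !mulr1 hornerZ.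
have /andP[/subnK Ej _] := Dj.
by rewrite -[X in _ = _ ^+ X * _]Ej addn1 exprS; field.
Qed.
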